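(* Let $r,n\ge 1$ and work in the group algebra $\mathbb{Z}[\mathsf{G}_{r,n}]$. Put $$\Phi_1:=1+\sum_{t=1}^{r-1}(1^{[t]}\,1),\qquad \Phi_j:=1+\sum_{i=1}^{j-1}(i\,j)+\sum_{t=1}^{r-1}\sum_{i=1}^{j}(i^{[t]}\,j)\quad(2\le j\le n),$$ where $(i\,j)=(i^{[0]}\,j)$. Then $$\Phi_1\Phi_2\cdots\Phi_n=\sum_{\pi\in\mathsf{G}_{r,n}}\pi .$$
   Context: $\mathsf{G}_{r,n}=C_r\wr\mathfrak{S}_n$ is the set of pairs $\pi=(\sigma,\mathbf z)$ with $\sigma\in\mathfrak S_n$ and $\mathbf z=(z_1,\dots,z_n)\in(\mathbb Z/r\mathbb Z)^n$, written as the word (window notation) $\pi=\sigma_1^{[z_1]}\sigma_2^{[z_2]}\cdots\sigma_n^{[z_n]}$; $\sigma_i$ is the base value and $z_i\in\{0,\dots,r-1\}$ the color of the $i$-th letter, colors being read modulo $r$. The product is $(\sigma,\mathbf z)(\rho,\mathbf w)=(\sigma\rho,\mathbf w+\rho(\mathbf z))$ with $\rho(\mathbf z)=(z_{\rho(1)},\dots,z_{\rho(n)})$; the identity is $12\cdots n$ with all colors $0$. For $1\le i<j\le n$ and $t\in\mathbb Z/r\mathbb Z$, $(i^{[t]}\,j)$ denotes the element such that, for every $\pi=\sigma_1^{[z_1]}\cdots\sigma_n^{[z_n]}$, the product $\pi\cdot(i^{[t]}\,j)$ is obtained from $\pi$ by replacing the letter in position $j$ by $\sigma_i^{[z_i+t]}$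 and the letter in position $i$ by $\sigma_j^{[z_j-t]}$. For $1\le i\le n$ and $0<t<r$, $(i^{[t]}\,i)$ denotes the element such that $\pi\cdot(i^{[t]}\,i)$ is obtained from $\pi$ by replacing the letter in position $i$ by $\sigma_i^{[z_i+t]}$. *)

From mathcomp Require Import all_boot all_order all_algebra all_fingroup.
Set Implicit Arguments. Unset Strict Implicit. Unset Printing Implicit Defensive.
Import GRing.Theory.
Local Open Scope ring_scope.

(* Colors: Z/rZ, realised as 'I_(r.-1).+1 (which has r elements for r >= 1)
   with its canonical additive structure (addition modulo r). *)
Definition col (r : nat) : finType := 'I_(r.-1).+1.

(* An element of G_{r,n} = C_r wr S_n: a pair (sigma, z) with sigma a
   permutation of the positions {0..n-1} and z the vector of colors.
   (Window notation: the i-th letter is sigma(i)^[z_i].) *)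
Definition G (r n : nat) : finType := ({perm 'I_n} * {ffun 'I_n -> col r})%type.

(* Product (sigma,z)(rho,w) = (sigma rho, w + rho(z)), rho(z) = (z_{rho 1},..,z_{rho n}),
   where sigma rho is the composite k |-> sigma (rho k).  In mathcomp,
   (rho * sigma)%g k = sigma (rho k)  (permM). *)
Definition gmul (r n : nat) (x y : G r n) : G r n :=
  let: (s, z) := x in let: (p, w) := y in
  ((p * s)%g, [ffun k => (w k + z (p k))%R : col r]).

Definition gone (r n : nat) : G r n := (1%g, [ffun _ => (0 : 'I_(r.-1).+1)]).

(* For i <> j: underlying permutation the
   transposition of positions i and j, colors -t at i, t at j, 0 elsewhere;
   right multiplication by it replaces the letter at position j by
   sigma_i^[z_i+t] and the letter at position i by sigma_j^[z_j-t].
   For i = j: identity permutation, color t at i (and 0 elsewhere);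
   right multiplication adds t to the color at position i. *)
Definition cyc (r n : nat) (i j : 'I_n) (t : col r) : G r n :=
  (tperm i j,
   [ffun k => if k == j then t else if k == i then (- t)%R else (0 : 'I_(r.-1).+1)]).

Definition galg (r n : nat) := {ffun G r n -> int}.

Definition delta (r n : nat) (g : G r n) : galg r n := [ffun h => ((h == g) : nat)%:Z].

Definition gadd (r n : nat) (a b : galg r n) : galg r n := [ffun g => a g + b g].

Definition conv (r n : nat) (a b : galg r n) : galg r n :=
  [ffun g => \sum_(h : G r n) \sum_(k : G r n | gmul h k == g) a h * b k].

Definition galg1 (r n : nat) : galg r n := delta (gone r n).

Definition gsum (r n : nat) (I : finType) (P : pred I) (F : I -> galg r n) : galg r n :=
  [ffun g => \sum_(x | P x) F x g].

(* Phi_{j+1} for a 0-based position j : 'I_n :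
   1 + sum_{i < j} (i j) + sum_{t = 1}^{r-1} sum_{i <= j} (i^[t] j).
   For j = 0 (paper's Phi_1) the first sum is empty and the second sum is
   sum_{t=1}^{r-1} (1^[t] 1), matching the paper's separate definition. *)
Definition Phi (r n : nat) (j : 'I_n) : galg r n :=
  gadd (gadd (galg1 r n)
             (gsum (fun i : 'I_n => (i < j)%N) (fun i => delta (cyc i j 0))))
       (gsum (fun p : col r * 'I_n => (p.1 != 0) && (p.2 <= j)%N)
             (fun p => delta (cyc p.2 j p.1))).

Definition Phi_prod (r n : nat) : galg r n :=
  foldr (@conv r n) (galg1 r n) [seq Phi r j | j <- enum 'I_n].

Definition gall (r n : nat) : galg r n := [ffun _ => 1%:Z].

From Pilot Require Import Defs.
From mathcomp Require Import all_boot all_order all_algebra all_fingroup.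
Set Implicit Arguments. Unset Strict Implicit. Unset Printing Implicit Defensive.
Import GRing.Theory.
Local Open Scope ring_scope.

(* Let H_m be the subgroup of G_{r,n} of elements fixing every position beyond m
   with color 0, a copy of G_{r,m}.  Every g in H_{j+1} factors uniquely as
   g = h (i^[t] j+1) with h in H_j and i <= j+1: i is the position holding the
   letter j+1, and t is then forced by its color.  Hence 1_{H_j} Phi_{j+1} is the
   indicator of H_{j+1}, and Phi_1 ... Phi_n is the indicator of H_n = G_{r,n}. *)

Definition gdiv r n (g k : G r n) : G r n :=
  let: (s, z) := g in let: (p, w) := k in
  ((p^-1 * s)%g, [ffun m => z ((p^-1)%g m) - w ((p^-1)%g m) : Defs.col r]).

Section WreathProduct.
Variables r n : nat.
Implicit Types x y g h k : G r n.

Lemma gmulA x y k : gmul (gmul x y) k = gmul x (gmul y k).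
Proof.
case: x => s z; case: y => p u; case: k => q v /=.
congr pair; first by rewrite mulgA.
by apply/ffunP => m; rewrite !ffunE permM addrA.
Qed.

Lemma gmul1g x : gmul (gone r n) x = x.
Proof.
case: x => s z /=; congr pair; first by rewrite mulg1.
by apply/ffunP => m; rewrite !ffunE addr0.
Qed.

Lemma gmulg1 x : gmul x (gone r n) = x.
Proof.
case: x => s z /=; congr pair; first by rewrite mul1g.
by apply/ffunP => m; rewrite !ffunE perm1 add0r.
Qed.

Lemma gmulK h k : gdiv (gmul h k) k = h.
Proof.
case: h k => s z [p w] /=; congr pair; first by rewrite mulKg.
by apply/ffunP => m; rewrite !ffunE permKV addrC addKr.
Qed.

Lemma gdivK g k : gmul (gdiv g k) k = g.
Proof.
case: g k => s z [p w] /=; congr pair; first by rewrite mulKVg.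
by apply/ffunP => m; rewrite !ffunE permK addrC subrK.
Qed.

Lemma gmul_eq_gdiv h k g : (gmul h k == g) = (h == gdiv g k).
Proof. by apply/eqP/eqP => [<-|->]; rewrite ?gmulK ?gdivK. Qed.

Lemma gdivM g h k : gdiv g (gmul h k) = gdiv (gdiv g k) h.
Proof. by apply/eqP; rewrite eq_sym -gmul_eq_gdiv -gmulA !gdivK. Qed.

Lemma gdivg1 g : gdiv g (gone r n) = g.
Proof. by apply/eqP; rewrite eq_sym -gmul_eq_gdiv gmulg1. Qed.

Lemma gdiv_eq1 g k : (gdiv g k == gone r n) = (k == g).
Proof. by rewrite eq_sym -gmul_eq_gdiv gmul1g. Qed.

Lemma cyc_refl0 (j : 'I_n) : cyc j j 0 = gone r n.
Proof.
rewrite /cyc tperm1; congr pair; apply/ffunP => k; rewrite !ffunE.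
by case: ifP; rewrite // oppr0; case: ifP.
Qed.

End WreathProduct.

Section GroupAlgebra.
Variables r n : nat.
Implicit Types a b c : galg r n.
Implicit Types g h k : G r n.

Lemma convE a b g : conv a b g = \sum_k a (gdiv g k) * b k.
Proof.
rewrite ffunE (exchange_big_dep xpredT) //=; apply: eq_bigr => k _.
by rewrite (eq_bigl (pred1 (gdiv g k))) ?big_pred1_eq // => h; rewrite gmul_eq_gdiv.
Qed.

Lemma conv_delta a k g : conv a (delta k) g = a (gdiv g k).
Proof.
rewrite convE (bigD1 k) //= ffunE eqxx mulr1 big1 ?addr0 // => h /negbTE hk.
by rewrite ffunE hk mulr0.
Qed.

Lemma conv_gsum_delta (I : finType) (P : pred I) (f : I -> G r n) a g :
  conv a (gsum P (fun x => delta (f x))) g = \sum_(x | P x) a (gdiv g (f x)).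
Proof.
rewrite convE; under eq_bigr => k _ do rewrite ffunE mulr_sumr.
by rewrite exchange_big; apply: eq_bigr => x _; rewrite -conv_delta convE.
Qed.

Lemma convA a b c : conv (conv a b) c = conv a (conv b c).
Proof.
apply/ffunP => g; rewrite !convE.
under [RHS]eq_bigr => m _ do rewrite convE mulr_sumr.
rewrite exchange_big /=; apply: eq_bigr => k _.
rewrite convE mulr_suml [RHS](reindex (fun h => gmul h k)) /=.
  by apply: eq_bigr => h _; rewrite gdivM gmulK mulrA.
by exists (fun g => gdiv g k) => h _; [exact: gmulK | exact: gdivK].
Qed.

Lemma conv1r a : conv a (galg1 r n) = a.
Proof. by apply/ffunP => g; rewrite conv_delta gdivg1. Qed.

Lemma conv1l a : conv (galg1 r n) a = a.
Proof.
apply/ffunP => g; rewrite convE (bigD1 g) //= ffunE gdiv_eq1 eqxx mul1r big1 ?addr0 //.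
by move=> k /negbTE gk; rewrite ffunE gdiv_eq1 gk mul0r.
Qed.

Lemma foldr_conv_rcons (s : seq (galg r n)) a :
  foldr (@conv r n) (galg1 r n) (rcons s a) = conv (foldr (@conv r n) (galg1 r n) s) a.
Proof. by elim: s => [|b s IHs] /=; rewrite ?conv1r ?conv1l // IHs convA. Qed.

End GroupAlgebra.

Definition supported_below r n (m : nat) (x : G r n) : bool :=
  [forall k : 'I_n, (m <= k)%N ==> (x.1 k == k) && (x.2 k == 0)].

Definition ind_below r n (m : nat) : galg r n :=
  [ffun x => (supported_below m x : nat)%:Z].

Section Stabilizers.
Variables r n : nat.
Implicit Types g x : G r n.

Lemma supported_below0 x : supported_below 0 x = (x == gone r n).
Proof.
case: x => s z; apply/forallP/eqP => [fixes | [-> ->] k]; last by rewrite perm1 ffunE !eqxx.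
congr pair; [apply/permP | apply/ffunP] => k; have /andP[/eqP /= sk /eqP /= zk] := fixes k.
  by rewrite perm1 sk.
by rewrite ffunE zk.
Qed.

Lemma supported_below_all x : supported_below n x.
Proof. by apply/forallP => k; rewrite leqNgt ltn_ord. Qed.

Lemma supported_belowS (j : 'I_n) x :
  supported_below j x = [&& x.1 j == j, x.2 j == 0 & supported_below j.+1 x].
Proof.
apply/forallP/and3P => [fixes | [/eqP xj1 /eqP xj2 /forallP fixes] k].
  have /implyP/(_ (leqnn j))/andP[-> ->] := fixes j; split=> //.
  by apply/forallP => k; apply/implyP => /ltnW; apply/implyP/fixes.
apply/implyP; rewrite leq_eqVlt => /orP[/eqP/val_inj <- | ]; first by rewrite xj1 xj2 !eqxx.
exact/implyP/fixes.
Qed.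

Lemma gdiv_cycE g (i j k : 'I_n) t :
  (gdiv g (cyc i j t)).1 k = g.1 (tperm i j k) /\
  (gdiv g (cyc i j t)).2 k = g.2 (tperm i j k) - (cyc i j t).2 (tperm i j k).
Proof. by case: g => s z; rewrite /= tpermV permM ffunE. Qed.

Lemma supported_below_gdiv_cyc g (i j : 'I_n) t : (i <= j)%N ->
  supported_below j (gdiv g (cyc i j t)) =
  [&& supported_below j.+1 g, g.1 i == j & t == (if i == j then g.2 i else - g.2 i)].
Proof.
move=> le_ij; rewrite supported_belowS.
have [-> ->] := gdiv_cycE g i j j t; rewrite tpermR ffunE eqxx.
have -> : supported_below j.+1 (gdiv g (cyc i j t)) = supported_below j.+1 g.
  apply: eq_forallb => k; case: ltnP => //= lt_jk.
  have [ne_ki ne_kj] : k != i /\ k != j.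
    by rewrite -!val_eqE !neq_ltn lt_jk (leq_ltn_trans le_ij) ?orbT.
  have [-> ->] := gdiv_cycE g i j k t.
  by rewrite tpermD 1?eq_sym // ffunE (negbTE ne_kj) (negbTE ne_ki) subr0.
rewrite [RHS]andbC -andbA; congr (_ && (_ && _)).
have [_ | _] := eqVneq i j; first by rewrite subr_eq0 eq_sym.
by rewrite opprK addrC addr_eq0.
Qed.

Lemma coset_rep_unique g (j : 'I_n) : supported_below j.+1 g ->
  \sum_(p : Defs.col r * 'I_n | (p.2 <= j)%N)
     ((g.1 p.2 == j) && (p.1 == if p.2 == j then g.2 p.2 else - g.2 p.2) : nat)%:Z = 1.
Proof.
move=> supp_g; set i := (g.1^-1)%g j.
have gi : g.1 i = j by rewrite permKV.
have le_ij : (i <= j)%N.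
  rewrite leqNgt; apply/negP => lt_ji.
  have /implyP/(_ lt_ji)/andP[/eqP fixi _] := forallP supp_g i.
  by move: lt_ji; rewrite -gi fixi ltnn.
rewrite (bigD1 (if i == j then g.2 i else - g.2 i, i)) //= gi !eqxx big1 ?addr0 //.
case=> t k /= /andP[_ ne_p]; case: eqP => [gk | //].
have eki : k = i by apply: (@perm_inj _ g.1); rewrite gi.
by move: ne_p; rewrite eki xpair_eqE eqxx andbT => /negbTE ->.
Qed.

End Stabilizers.

Section Product.
Variables r n : nat.

(* The summand 1 of Phi_j is the missing term (j^[0] j) of its first sum. *)
Lemma Phi_gsum (j : 'I_n) :
  Phi r j = gsum (fun p : Defs.col r * 'I_n => (p.2 <= j)%N)
                 (fun p => delta (cyc p.2 j p.1)).
Proof.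
apply/ffunP => g; rewrite !ffunE [RHS](bigID (fun p => p.1 == 0)) /=.
congr (_ + _); last by apply: eq_bigl => p; rewrite andbC.
rewrite (eq_bigl (fun p : Defs.col r * 'I_n => (p.1 == 0) && (p.2 <= j)%N)) => [|p];
  last by rewrite andbC.
rewrite -(pair_big_dep (pred1 0) (fun _ (i : 'I_n) => (i <= j)%N)
                       (fun t i => delta (cyc i j t) g)).
rewrite big_pred1_eq [RHS](bigD1 j) //= cyc_refl0 ffunE; congr (_ + _).
by apply: eq_big => [i | i _]; rewrite ?ffunE // ltn_neqAle val_eqE andbC.
Qed.

Lemma ind_below_conv_Phi (j : 'I_n) : conv (ind_below r n j) (Phi r j) = ind_below r n j.+1.
Proof.
apply/ffunP => g; rewrite Phi_gsum conv_gsum_delta ffunE.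
under eq_bigr => p le_pj do rewrite ffunE supported_below_gdiv_cyc //.
case supp_g: (supported_below j.+1 g); last by rewrite big1.
exact: coset_rep_unique.
Qed.

Lemma Phi_prefix m : (m <= n)%N ->
  foldr (@conv r n) (galg1 r n) [seq Phi r j | j <- take m (enum 'I_n)] = ind_below r n m.
Proof.
elim: m => [_ | m IHm lt_mn].
  by apply/ffunP => x; rewrite take0 !ffunE supported_below0.
set j := Ordinal lt_mn.
rewrite (take_nth j) ?size_enum_ord // map_rcons foldr_conv_rcons IHm 1?ltnW //.
have -> : nth j (enum 'I_n) m = j by apply: val_inj; rewrite /= nth_enum_ord.
exact: ind_below_conv_Phi j.
Qed.

End Product.

Theorem lemma2p2 (r n : nat) (hr : (1 <= r)%N) (hn : (1 <= n)%N) :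
  Phi_prod r n = gall r n.
Proof.
rewrite /Phi_prod -(take_size (enum 'I_n)) size_enum_ord Phi_prefix //.
by apply/ffunP => x; rewrite !ffunE supported_below_all.
Qed.
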